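(* Let $(x^k)$ be generated by the augmented Lagrangian method described below, where each step satisfies the inexactness assumption described below, let $\bar x$ be a limit point of $(x^k)$, and assume that for every $\nu$ the function $h^\nu$ satisfies CPLD$_\nu$ in $\bar x$. Then $\bar x$ is a KKT point of the Feasibility GNEP.
   Context: GNEP: $N$ players, variables $x=(x^1,\ldots,x^N)\in\mathbb{R}^n$, $x^\nu\in\mathbb{R}^{n_\nu}$. Player $\nu$ solves $\min_{x^\nu}\theta_\nu(x)$ s.t. $g^\nu(x)\le0$, $h^\nu(x)\le0$, with continuously differentiable $\theta_\nu:\mathbb{R}^n\to\mathbb{R}$, $g^\nu:\mathbb{R}^n\to\mathbb{R}^{m_\nu}$, $h^\nu:\mathbb{R}^n\to\mathbb{R}^{p_\nu}$ ($p_\nu=0$ allowed); $m=\sum m_\nu$, $p=\sum p_\nu$. Notation: $v_+=\max\{0,v\}$ componentwise, $g^\nu_+(x)=(g^\nu(x))_+$; $\nabla f$ = transposed Jacobian, $\nabla_{x^\nu}f$ its rows for $x^\nu$; $\min$ of vectors componentwise; Euclidean norms. Vectors in $\mathbb{R}^m$ (resp. $\mathbb{R}^p$) are split into player blocks $\lambda^{\nu}\in\mathbb{R}^{m_\nu}$ (resp. $\mu^\nu\in\mathbb{R}^{p_\nu}$). Augmented Lagrangian of player $\nu$: $L_a^\nu(x,u;\rho)=\theta_\nu(x)+\frac{\rho}{2}\|(g^\nu(x)+u/\rho)_+\|^2$. Method: choose $x^0\in\mathbb{R}^n,\lambda^0\in\mathbb{R}^m,\mu^0\in\mathbb{R}^p$,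 an initial $u^0\in\mathbb{R}^m$, $u^{\max}\ge0$, and for each $\nu$: $\tau_\nu\in(0,1)$, $\gamma_\nu>1$, $\rho_{\nu,0}>0$. For $k=0,1,2,\dots$ (the method is assumed to run forever): (1) compute $(x^{k+1},\mu^{k+1})\in\mathbb{R}^{n+p}$ satisfying the inexactness assumption; (2) $\lambda^{\nu,k+1}=(u^{\nu,k}+\rho_{\nu,k}g^\nu(x^{k+1}))_+$; (3) for each $\nu$: if $\|\min\{-g^\nu(x^{k+1}),\lambda^{\nu,k+1}\}\|\le\tau_\nu\|\min\{-g^\nu(x^k),\lambda^{\nu,k}\}\|$ then $\rho_{\nu,k+1}=\rho_{\nu,k}$, else $\rho_{\nu,k+1}=\gamma_\nu\rho_{\nu,k}$; (4) $u^{k+1}=\min\{\lambda^{k+1},u^{\max}\}$ componentwise. Inexactness assumption: for all $k,\nu$, $\|\nabla_{x^\nu}L_a^\nu(x^{k+1},u^{\nu,k};\rho_{\nu,k})+\nabla_{x^\nu}h^\nu(x^{k+1})\mu^{\nu,k+1}\|\le\varepsilon_k$ and $\|\min\{-h^\nu(x^{k+1}),\mu^{\nu,k+1}\}\|\le\varepsilon_k'$, with $(\varepsilon_k)\subset[0,\infty)$ bounded and $\varepsilon'_k\to0$. Feasibility GNEP: player $\nu$ solves $\min_{x^\nu}\|g^\nu_+(x)\|^2$ s.t. $h^\nu(x)\le0$. A point $\bar x$ is a KKT point of it if for every $\nu$ there is $w^\nu\in\mathbb{R}^{p_\nu}$ with $\nabla_{x^\nu}\|g^\nu_+(\bar x)\|^2+\nabla_{x^\nu}h^\nu(\bar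 x)w^\nu=0$ and $\min\{-h^\nu(\bar x),w^\nu\}=0$. CPLD$_\nu$ for $h^\nu$ at $x$ with $h^\nu(x)\le0$: whenever $\nabla_{x^\nu}h_j^\nu(x)$, $j\in J$, are positively linearly dependent (a nontrivial nonnegative combination vanishes) for some $J\subset\{j:h_j^\nu(x)=0\}$, the vectors $\nabla_{x^\nu}h_j^\nu(y)$, $j\in J$, are linearly dependent for all $y$ in a neighbourhood of $x$. *)

From HB Require Import structures.
From mathcomp Require Import all_boot all_order all_algebra.
From mathcomp Require Import all_classical all_reals all_analysis.
Set Implicit Arguments. Unset Strict Implicit. Unset Printing Implicit Defensive.
Import Order.TTheory GRing.Theory Num.Theory.
Import numFieldNormedType.Exports.
Local Open Scope ring_scope.
Local Open Scope classical_set_scope.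

Section GNEPDefs.
Variable R : realType.
Variable n : nat.

Notation vec := 'rV[R]_n.

Definition pd (f : vec -> R) (x : vec) (i : 'I_n) : R :=
  'd f x (delta_mx 0 i).

Definition C1 (f : vec -> R) : Prop :=
  (forall x, differentiable f x) /\ (forall i, continuous (fun x => pd f x i)).

Definition enorm (I : finType) (v : I -> R) : R :=
  Num.sqrt (\sum_(j : I) v j ^+ 2).

(* player blocks: coordinate i of x belongs to player blk i;
   x^nu = (x_i)_{blk i = nu}.  Euclidean norm of the nu-block of a vector F. *)
Variable N : nat.
Variable blk : 'I_n -> 'I_N.

Definition bnorm (nu : 'I_N) (F : 'I_n -> R) : R :=
  Num.sqrt (\sum_(i | blk i == nu) F i ^+ 2).

Definition sqplus (m : nat) (g : 'I_m -> vec -> R) (x : vec) : R :=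
  \sum_(j < m) (Num.max 0 (g j x)) ^+ 2.

Definition La (m : nat) (theta : vec -> R) (g : 'I_m -> vec -> R)
  (u : 'I_m -> R) (rho : R) (x : vec) : R :=
  theta x + rho / 2 * \sum_(j < m) (Num.max 0 (g j x + u j / rho)) ^+ 2.

Definition CPLD (nu : 'I_N) (p : nat) (h : 'I_p -> vec -> R) (x : vec) : Prop :=
  forall J : {set 'I_p},
    (forall j, j \in J -> h j x = 0) ->
    (exists a : 'I_p -> R,
        (forall j, j \notin J -> a j = 0) /\
        (forall j, 0 <= a j) /\ (exists j, a j != 0) /\
        (forall i, blk i = nu -> \sum_(j < p) a j * pd (h j) x i = 0)) ->
    \forall y \near x,
      exists a : 'I_p -> R,
        (forall j, j \notin J -> a j = 0) /\ (exists j, a j != 0) /\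
        (forall i, blk i = nu -> \sum_(j < p) a j * pd (h j) y i = 0).

End GNEPDefs.

From HB Require Import structures.
From mathcomp Require Import all_boot all_order all_algebra.
From mathcomp Require Import all_classical all_reals all_analysis.
From mathcomp Require Import ring lra.
Import Order.TTheory GRing.Theory Num.Theory.
Import numFieldNormedType.Exports.
Local Open Scope ring_scope.
Local Open Scope classical_set_scope.

Set Implicit Arguments. Unset Strict Implicit. Unset Printing Implicit Defensive.

(* Fix a player nu.  Along an ultrafilter U on nat refining the subsequence that
   converges to xbar, every bounded real sequence converges; this replaces all
   extractions of further subsequences.  If the penalty rho_k stays bounded, the
   test of step (3) eventually always succeeds, so the residual
   || min(-g(x^k), lambda^k) || decreases geometrically and g(xbar) <= 0: then
   w = 0 is a KKT multiplier.  Otherwise rho_k -> +oo, and dividing the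
   approximate stationarity condition by rho_k removes the gradient of theta and
   the bounded safeguards u^k, so that
     sum_j (mu_j^{k+1} / rho_k) grad h_j(x^{k+1}) --> - 1/2 grad ||g_+(xbar)||^2.
   Approximate complementarity makes the scaled multipliers of the constraints
   inactive at xbar vanish in the limit, and a Caratheodory-type reduction, which
   is where CPLD enters, puts the limit in the cone spanned by the gradients of
   the active constraints at xbar; twice its coefficients give w. *)

Section real_filters.
Variable R : realType.

Lemma cvg_sum (T : Type) (F : set_system T) {FF : Filter F} m
    (f : 'I_m -> T -> R) (a : 'I_m -> R) :
  (forall j, f j @ F --> a j) ->
  (fun t => \sum_(j < m) f j t) @ F --> \sum_(j < m) a j.
Proof. by move=> fa; apply: (cvg_big add_continuous) => // j _; exact: fa. Qed.

Lemma norm_le_cvg0 (T : Type) (F : set_system T) {FF : Filter F} (f e : T -> R) :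
  (\forall t \near F, `|f t| <= e t) -> e @ F --> 0 -> f @ F --> 0.
Proof.
move=> fe e0; apply: (@squeeze_cvgr _ _ _ _ (fun t => - e t) e) => //.
  by apply: filterS fe => t; rewrite ler_norml.
by rewrite -oppr0; exact: cvgN.
Qed.

Lemma cvg_max0 (T : Type) (F : set_system T) {FF : Filter F} (f : T -> R) (l : R) :
  f @ F --> l -> (fun t => Num.max 0 (f t)) @ F --> Num.max 0 l.
Proof.
by move=> fl; apply: continuous2_cvg (cvg_cst 0) fl; exact: (@max_continuous _ R (0, l)).
Qed.

Lemma ge0_cvg_of_min_cvg0 (T : Type) (F : set_system T) {FF : ProperFilter F}
    (a c : T -> R) (l : R) :
  a @ F --> l -> (fun t => Num.min (a t) (c t)) @ F --> 0 -> 0 <= l.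
Proof.
move=> al m0; rewrite -[l]subr0.
apply: (cvgr_to_ge (cvgB al m0)); apply: nearW => t.
by rewrite subr_ge0 ge_min lexx.
Qed.

Lemma exprn_unbounded (r c M : R) : 1 < r -> 0 < c -> exists k : nat, M < r ^+ k * c.
Proof.
move=> r1 c0.
have bernoulli k : 1 + k%:R * (r - 1) <= r ^+ k.
  elim: k => [|k IH]; first by rewrite mul0r addr0 expr0.
  rewrite exprS -natr1.
  have : 0 <= k%:R * (r - 1) ^+ 2 :> R by rewrite mulr_ge0 // sqr_ge0.
  nra.
pose y := Num.max 0 (M / (c * (r - 1))).
have y0 : 0 <= y by rewrite le_max lexx.
exists (Num.Def.archi_bound y); have := archi_boundP y0.
have cr : 0 < c * (r - 1) by rewrite mulr_gt0 // subr_gt0.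
have : M <= y * (c * (r - 1)) by rewrite -ler_pdivrMr // le_max lexx orbT.
have := bernoulli (Num.Def.archi_bound y).
nra.
Qed.

Section ultrafilters.
Variables (T : Type) (F : set_system T).
Hypothesis FU : UltraFilter F.

Lemma ultra_fmap (S : Type) (f : T -> S) : UltraFilter (f @ F).
Proof.
split; first exact: fmap_proper_filter.
move=> G GF sFG; rewrite predeqE => A; split; last exact: sFG.
move=> GA; have [//|FnA] := in_ultra_setVsetC (f @^-1` A) FU.
have GnA : G (~` A) by apply: sFG.
by have [? []] := filter_ex (filterI GA GnA).
Qed.

Lemma ultra_bounded_cvg (f : T -> R) (M : R) :
  (\forall t \near F, `|f t| <= M) -> exists l : R, f @ F --> l.
Proof.
move=> fM; have FA : (f @ F) `[- M, M].
  by apply: filterS fM => t /=; rewrite in_itv /= -ler_norml.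
have := @segment_compact R (- M) M; rewrite compact_ultra.
by move=> /(_ _ (ultra_fmap f) FA) [l [_ fl]]; exists l.
Qed.

Lemma ultra_bounded_cvg_fam (I : Type) (f : T -> I -> R) (M : R) :
    (\forall t \near F, forall i, `|f t i| <= M) ->
  exists l : I -> R, forall i, (fun t => f t i) @ F --> l i.
Proof.
move=> fM; have cvg_i i : exists l : R, (fun t => f t i) @ F --> l.
  by apply: (@ultra_bounded_cvg _ M); apply: filterS fM => t; apply.
by have [l fl] := choice cvg_i; exists l.
Qed.

Lemma ultra_exists_fin (I : finType) (A : I -> set T) :
  (\forall t \near F, exists i, A i t) -> exists i, F (A i).
Proof.
move=> FA; apply: contrapT => /forallNP nA.
have FnA i : F (~` A i) by have [/nA|] := in_ultra_setVsetC (A i) FU.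
have [t [[i Ait] /(_ i)]] := filter_ex (filterI FA (filter_forall _ FnA)).
exact.
Qed.

Lemma ultra_bounded_or_cvgy (f : T -> R) :
  (exists M, \forall t \near F, f t <= M) \/ f @ F --> +oo%R.
Proof.
have [bnd|unbnd] := pselect (exists M, \forall t \near F, f t <= M); first by left.
right; apply/cvgryPgt => M.
have [FM|] := in_ultra_setVsetC [set t | f t <= M] FU.
  by exfalso; apply: unbnd; exists M.
by apply: filterS => t /negP; rewrite -ltNge.
Qed.

End ultrafilters.

End real_filters.

Section positive_part_square.
Variable R : realType.

Definition sqpos (t : R) := Num.max 0 t ^+ 2.

Lemma sqpos_taylor (t s : R) :
  `|sqpos (s + t) - sqpos t - s * (2 * Num.max 0 t)| <= 2 * s ^+ 2.
Proof.
rewrite /sqpos ler_norml.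
by have [t0|t0] := leP 0 t; have [st|st] := leP 0 (s + t); apply/andP; split; nra.
Qed.

Lemma sqpos_difference_quotient (t : R) :
  (fun s : R => s^-1 *: ((sqpos \o shift t) (s *: 1) - sqpos t)) @ 0^'
    --> 2 * Num.max 0 t.
Proof.
apply/subr_cvg0; apply: (@norm_le_cvg0 _ _ _ _ _ (fun s : R => 2 * `|s|)); last first.
  rewrite -[X in _ --> X](mulr0 2); apply: cvgM; first exact: cvg_cst.
  by rewrite -[X in _ --> X](@normr0 _ R); apply: cvg_norm; exact: cvg_within.
near=> s; have s0 : s != 0 by near: s; exact: nbhs_dnbhs_neq.
rewrite /= /shift /= [s *: 1]mulr1.
have -> : s^-1 * (sqpos (s + t) - sqpos t) - 2 * Num.max 0 t
    = s^-1 * (sqpos (s + t) - sqpos t - s * (2 * Num.max 0 t)) by field.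
rewrite normrM normrV ?unitfE // ler_pdivrMl ?normr_gt0 //.
by apply: le_trans (sqpos_taylor t s) _; rewrite -real_normK ?num_real //; nra.
Unshelve. all: by end_near. Qed.

Lemma derivable_sqpos (t : R) : derivable sqpos t 1.
Proof. by apply: (cvgP (2 * Num.max 0 t)); exact: sqpos_difference_quotient. Qed.

Lemma differentiable_sqpos (t : R) : differentiable sqpos t.
Proof. exact/derivable1_diffP/derivable_sqpos. Qed.

Lemma derive1_sqpos (t : R) : derive1 sqpos t = 2 * Num.max 0 t.
Proof.
rewrite derive1E; apply: cvg_lim; first exact: norm_hausdorff.
exact: sqpos_difference_quotient.
Qed.

Variable V : normedModType R.

Lemma differentiable_sqpos_comp (G : V -> R) (y : V) :
  differentiable G y -> differentiable (sqpos \o G) y.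
Proof. by move=> dG; apply: differentiable_comp => //; exact: differentiable_sqpos. Qed.

Lemma diff_sqpos_comp (G : V -> R) (y v : V) : differentiable G y ->
  'd (sqpos \o G) y v = 2 * Num.max 0 (G y) * 'd G y v.
Proof.
move=> dG; rewrite diff_comp //; last exact: differentiable_sqpos.
rewrite /= deriv1E; last exact: derivable_sqpos.
by rewrite mulrC -derive1_sqpos.
Qed.

Lemma sum_sqpos_comp m (G : 'I_m -> V -> R) :
  (fun x => \sum_(j < m) sqpos (G j x)) = \sum_(j < m) (sqpos \o G j).
Proof. by apply/funext => x; rewrite fct_sumE. Qed.

Lemma differentiable_sum_sqpos m (G : 'I_m -> V -> R) (y : V) :
  (forall j, differentiable (G j) y) ->
  differentiable (fun x => \sum_(j < m) sqpos (G j x)) y.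
Proof.
move=> dG; rewrite sum_sqpos_comp; apply: differentiable_sum => j.
exact: differentiable_sqpos_comp.
Qed.

Lemma diff_sum_sqpos m (G : 'I_m -> V -> R) (y v : V) :
  (forall j, differentiable (G j) y) ->
  'd (fun x => \sum_(j < m) sqpos (G j x)) y v
    = \sum_(j < m) 2 * Num.max 0 (G j y) * 'd (G j) y v.
Proof.
move=> dG; have dsG j := differentiable_sqpos_comp (dG j).
rewrite sum_sqpos_comp -deriveE; last exact: differentiable_sum.
rewrite derive_sum => [|j]; last exact: diff_derivable.
apply: eq_bigr => j _; rewrite -(diff_sqpos_comp v (dG j)).
exact: deriveE (dsG j).
Qed.

Lemma diff_aug_lagrangian m (theta : V -> R) (g : 'I_m -> V -> R) (u : 'I_m -> R)
    (rho : R) (y v : V) :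
  differentiable theta y -> (forall j, differentiable (g j) y) ->
  'd (fun x => theta x + rho / 2 * \sum_(j < m) sqpos (g j x + u j / rho)) y v =
  'd theta y v + rho * \sum_(j < m) Num.max 0 (g j y + u j / rho) * 'd (g j) y v.
Proof.
move=> dtheta dg; pose G j x := g j x + u j / rho; pose S x := \sum_(j < m) sqpos (G j x).
have dG j : differentiable (G j) y by apply: differentiableD.
have dS : differentiable S y := differentiable_sum_sqpos dG.
have eG j : 'd (G j) y v = 'd (g j) y v.
  have eGD : 'd (G j) y v = 'd (g j) y v + 'd (cst (u j / rho)) y v :=
    congr1 (fun F => F v) (diffD (dg j) (differentiable_cst _ _)).
  by rewrite eGD diff_cst addr0.
have eD : 'd (theta + (rho / 2) *: S) y v = 'd theta y v + 'd ((rho / 2) *: S) y v :=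
  congr1 (fun F => F v) (diffD dtheta (differentiableZ _ dS)).
have eZ : 'd ((rho / 2) *: S) y v = rho / 2 * 'd S y v :=
  congr1 (fun F => F v) (diffZ (rho / 2) dS).
have -> : (fun x => theta x + rho / 2 * \sum_(j < m) sqpos (g j x + u j / rho))
  = theta + (rho / 2) *: S by [].
have eS : 'd S y v = \sum_(j < m) 2 * Num.max 0 (G j y) * 'd (G j) y v :=
  diff_sum_sqpos v dG.
rewrite eD eZ eS mulr_sumr; congr (_ + _).
by rewrite mulr_sumr; apply: eq_bigr => j _; rewrite eG /G; field.
Qed.

End positive_part_square.
Arguments sqpos {R}.

Section partial_derivatives.
Variables (R : realType) (n : nat).
Implicit Types (y : 'rV[R]_n) (i : 'I_n).

Lemma pd_sqplus m (g : 'I_m -> 'rV[R]_n -> R) y i :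
  (forall j, differentiable (g j) y) ->
  pd (sqplus g) y i = \sum_(j < m) 2 * Num.max 0 (g j y) * pd (g j) y i.
Proof. exact: diff_sum_sqpos. Qed.

Lemma pd_La m (theta : 'rV[R]_n -> R) (g : 'I_m -> 'rV[R]_n -> R) (u : 'I_m -> R)
    (rho : R) y i :
  differentiable theta y -> (forall j, differentiable (g j) y) ->
  pd (La theta g u rho) y i =
  pd theta y i + rho * \sum_(j < m) Num.max 0 (g j y + u j / rho) * pd (g j) y i.
Proof. exact: diff_aug_lagrangian. Qed.

End partial_derivatives.

Section finite_families.
Variable R : realType.

Lemma ler_norm_enorm (I : finType) (v : I -> R) j : `|v j| <= enorm v.
Proof.
rewrite /enorm -sqrtr_sqr; apply: ler_wsqrtr.
by rewrite (bigD1 j) //= lerDl; apply: sumr_ge0 => k _; exact: sqr_ge0.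
Qed.

Lemma ler_norm_bnorm n N (blk : 'I_n -> 'I_N) nu (F : 'I_n -> R) i :
  blk i = nu -> `|F i| <= bnorm blk nu F.
Proof.
move=> blk_i; rewrite /bnorm -sqrtr_sqr; apply: ler_wsqrtr.
by rewrite (bigD1 i) /= ?blk_i // lerDl; apply: sumr_ge0 => k _; exact: sqr_ge0.
Qed.

Lemma ratio_test_pos (I : finType) (b c : I -> R) j1 :
  (forall j, 0 <= b j) -> 0 < c j1 ->
  exists j0, 0 < c j0 /\
    exists t, (forall j, 0 <= b j - t * c j) /\ b j0 - t * c j0 = 0.
Proof.
move=> b_ge0 c_j1.
have [j0 c_j0 j0_min] := @arg_minP _ R I j1 (fun j => 0 < c j) (fun j => b j / c j) c_j1.
exists j0; split => //; exists (b j0 / c j0); split; last first.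
  by rewrite divfK ?subrr // gt_eqF.
have t_ge0 : 0 <= b j0 / c j0 by rewrite divr_ge0 // ltW.
move=> j; have [c_j|c_j] := ltP 0 (c j).
  have -> : b j - b j0 / c j0 * c j = c j * (b j / c j - b j0 / c j0).
    by field; rewrite !gt_eqF.
  by rewrite mulr_ge0 ?subr_ge0 ?j0_min // ltW.
by have := b_ge0 j; move: t_ge0 c_j; set t := b j0 / c j0; nra.
Qed.

Lemma ratio_test (I : finType) (b c : I -> R) :
  (forall j, 0 <= b j) -> (exists j, c j != 0) ->
  exists j0, c j0 != 0 /\
    exists t, (forall j, 0 <= b j - t * c j) /\ b j0 - t * c j0 = 0.
Proof.
move=> b_ge0 [j1 c_j1].
have [[j2 c_j2]|c_le0] := pselect (exists j, 0 < c j).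
  have [j0 [c_j0 [t tP]]] := ratio_test_pos b_ge0 c_j2.
  by exists j0; split; [rewrite gt_eqF|exists t].
have Nc_j1 : 0 < - c j1.
  rewrite oppr_gt0 lt_neqAle c_j1 leNgt /=; apply/negP => c_j1_gt0.
  by apply: c_le0; exists j1.
have [j0 [c_j0 [t [t_ge0 t_j0]]]] := ratio_test_pos (c := fun j => - c j) b_ge0 Nc_j1.
exists j0; split; first by rewrite -oppr_eq0 gt_eqF.
by exists (- t); split => [j|]; [move: (t_ge0 j)|move: t_j0]; rewrite mulrN mulNr.
Qed.

End finite_families.

Section cpld_cone.
Variables (R : realType) (n N : nat) (blk : 'I_n -> 'I_N) (nu : 'I_N) (p : nat).
Variables (h : 'I_p -> 'rV[R]_n -> R) (xbar : 'rV[R]_n).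

Local Notation hcomb b z i := (\sum_(j < p) b j * pd (h j) z i).

Definition nonneg_on (S : {set 'I_p}) (b : 'I_p -> R) :=
  (forall j, 0 <= b j) /\ (forall j, j \notin S -> b j = 0).

Lemma nonneg_on_shrink (S : {set 'I_p}) (b c : 'I_p -> R) z :
  nonneg_on S b -> (forall j, j \notin S -> c j = 0) -> (exists j, c j != 0) ->
  (forall i, blk i = nu -> hcomb c z i = 0) ->
  exists j0, j0 \in S /\ exists b' : 'I_p -> R,
    nonneg_on (S :\ j0) b' /\ forall i, blk i = nu -> hcomb b' z i = hcomb b z i.
Proof.
move=> [b_ge0 bS] cS c_neq0 c_dep.
have [j0 [c_j0 [t [bt_ge0 bt_j0]]]] := ratio_test b_ge0 c_neq0.
have j0S : j0 \in S by apply: contraNT c_j0 => /cS ->.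
exists j0; split => //; exists (fun j => b j - t * c j); split; first split.
- exact: bt_ge0.
- move=> j; rewrite in_setD1 negb_and negbK => /orP[/eqP -> //|jS].
  by rewrite bS // cS // mulr0 subr0.
- move=> i blk_i.
  rewrite (eq_bigr (fun j => b j * pd (h j) z i - t * (c j * pd (h j) z i))).
    by rewrite sumrB -mulr_sumr c_dep // mulr0 subr0.
  by move=> j _; rewrite mulrBl mulrA.
Qed.

Hypothesis cpld : CPLD blk nu h xbar.
Hypothesis pd_h_cont : forall j i, continuous (fun x => pd (h j) x i).
Variables (T : Type) (U : set_system T) (y : T -> 'rV[R]_n).
Hypotheses (U_ultra : UltraFilter U) (y_cvg : y @ U --> xbar).

Lemma hcomb_cvg (b : T -> 'I_p -> R) (w : 'I_p -> R) i :
  (forall j, (fun t => b t j) @ U --> w j) ->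
  (fun t => hcomb (b t) (y t) i) @ U --> hcomb w xbar i.
Proof.
move=> bw; apply: cvg_sum => j; apply: cvgM; first exact: bw.
exact: (cvg_comp _ _ y_cvg (@pd_h_cont j i xbar)).
Qed.

Definition in_cone (S : {set 'I_p}) (d : 'I_n -> R) :=
  exists w, nonneg_on S w /\ forall i, blk i = nu -> hcomb w xbar i = d i.

Lemma cone_limit_bounded (S : {set 'I_p}) (b : T -> 'I_p -> R) d M :
  (\forall t \near U, \sum_(j < p) b t j <= M) ->
  (\forall t \near U, nonneg_on S (b t)) ->
  (forall i, blk i = nu -> (fun t => hcomb (b t) (y t) i) @ U --> d i) ->
  in_cone S d.
Proof.
move=> sM b_nonneg bd.
have bM : \forall t \near U, forall j, `|b t j| <= M.
  apply: filterS (filterI b_nonneg sM) => t [[b_ge0 _] s_le] j.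
  rewrite ger0_norm //; apply: le_trans s_le.
  by rewrite (bigD1 j) //= lerDl sumr_ge0.
have [w bw] := ultra_bounded_cvg_fam U_ultra bM.
exists w; split; first split.
- move=> j; apply: cvgr_to_ge (bw j) _.
  by apply: filterS b_nonneg => t [+ _]; apply.
- move=> j jS; apply: (norm_cvg_unique (bw j)).
  by apply: cvg_near_cst; apply: filterS b_nonneg => t [_]; exact.
- by move=> i blk_i; apply: norm_cvg_unique (hcomb_cvg bw) (bd i blk_i).
Qed.

Lemma dependence_of_unbounded (S : {set 'I_p}) (b : T -> 'I_p -> R) (d : 'I_n -> R) :
  (\forall t \near U, nonneg_on S (b t)) ->
  (forall i, blk i = nu -> (fun t => hcomb (b t) (y t) i) @ U --> d i) ->
  (fun t => \sum_(j < p) b t j) @ U --> +oo%R ->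
  exists a, nonneg_on S a /\ (exists j, a j != 0) /\
    forall i, blk i = nu -> hcomb a xbar i = 0.
Proof.
move=> b_nonneg bd /[dup] s_oo /cvgryPgt s_gt.
pose s t := \sum_(j < p) b t j.
have s_pos : \forall t \near U, nonneg_on S (b t) /\ 0 < s t.
  exact: filterI b_nonneg (s_gt 0).
pose al t j := b t j / s t.
have al_bnd : \forall t \near U, forall j, `|al t j| <= 1.
  apply: filterS s_pos => t [[b_ge0 _] s_gt0] j.
  rewrite /al ger0_norm ?divr_ge0 ?(ltW s_gt0) // ler_pdivrMr // mul1r.
  by rewrite /s (bigD1 j) //= lerDl sumr_ge0.
have [a al_a] := ultra_bounded_cvg_fam U_ultra al_bnd.
have a_sum : \sum_(j < p) a j = 1.
  apply: (norm_cvg_unique (cvg_sum al_a)); apply: cvg_near_cst.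
  by apply: filterS s_pos => t [_ s_gt0]; rewrite -mulr_suml divff // gt_eqF.
exists a; split; [split|split].
- move=> j; apply: cvgr_to_ge (al_a j) _.
  by apply: filterS s_pos => t [[b_ge0 _] s_gt0]; rewrite divr_ge0 // ltW.
- move=> j jS; apply: norm_cvg_unique (al_a j) _; apply: cvg_near_cst.
  by apply: filterS s_pos => t [[_ bS] _]; rewrite /al bS // mul0r.
- apply: contrapT => /forallNP a0; move: a_sum; rewrite big1 => [/eqP|j _].
    by rewrite eq_sym oner_eq0.
  by apply/eqP/negPn/negP; exact: a0.
- move=> i blk_i; apply: norm_cvg_unique (hcomb_cvg al_a) _.
  have s_inv : (fun t => (s t)^-1) @ U --> 0.
    by apply/gtr0_cvgV0 => //; apply: filterS s_pos => t [].
  have prod0 : (fun t => (s t)^-1 * hcomb (b t) (y t) i) @ U --> 0.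
    by rewrite -[X in _ --> X](mul0r (d i)); exact: (cvgM s_inv (bd i blk_i)).
  apply: cvg_trans prod0; apply: near_eq_cvg; apply: nearW => t /=.
  by rewrite mulr_sumr; apply: eq_bigr => j _; rewrite mulrCA mulrA.
Qed.

Lemma cone_limit_shrink (S : {set 'I_p}) (b : T -> 'I_p -> R) (d : 'I_n -> R) :
  (\forall t \near U, nonneg_on S (b t)) ->
  (\forall t \near U, exists c : 'I_p -> R, (forall j, j \notin S -> c j = 0) /\
     (exists j, c j != 0) /\ forall i, blk i = nu -> hcomb c (y t) i = 0) ->
  (forall i, blk i = nu -> (fun t => hcomb (b t) (y t) i) @ U --> d i) ->
  exists j0, j0 \in S /\ exists b' : T -> 'I_p -> R,
    (\forall t \near U, nonneg_on (S :\ j0) (b' t)) /\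
    forall i, blk i = nu -> (fun t => hcomb (b' t) (y t) i) @ U --> d i.
Proof.
move=> b_nonneg dep bd.
pose P j0 t (b' : 'I_p -> R) := nonneg_on (S :\ j0) b' /\
  forall i, blk i = nu -> hcomb b' (y t) i = hcomb (b t) (y t) i.
have : \forall t \near U, exists j0, j0 \in S /\ exists b', P j0 t b'.
  apply: filterS (filterI b_nonneg dep) => t [bt [c [cS [c_neq0 c_dep]]]].
  exact: nonneg_on_shrink bt cS c_neq0 c_dep.
(* The index removed may depend on t; the ultrafilter selects one that works eventually. *)
move=> /(ultra_exists_fin U_ultra) [j0 Pj0].
have [_ [j0S _]] := filter_ex Pj0.
have pick_b' t : exists b', (exists b'', P j0 t b'') -> P j0 t b'.
  have [[b'' Pb'']|nP] := pselect (exists b'', P j0 t b''); first by exists b''.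
  by exists (fun=> 0) => /nP.
have [b' b'P] := choice pick_b'.
exists j0; split => //; exists b'; split.
  by apply: filterS Pj0 => t [_ /b'P []].
move=> i blk_i; apply: cvg_trans (bd i blk_i); apply: near_eq_cvg.
by apply: filterS Pj0 => t [_ /b'P [_ ->]].
Qed.

Lemma cone_limit_unbounded (S : {set 'I_p}) (b : T -> 'I_p -> R) (d : 'I_n -> R) :
  (forall j, j \in S -> h j xbar = 0) ->
  (\forall t \near U, nonneg_on S (b t)) ->
  (forall i, blk i = nu -> (fun t => hcomb (b t) (y t) i) @ U --> d i) ->
  (fun t => \sum_(j < p) b t j) @ U --> +oo%R ->
  exists j0, j0 \in S /\ exists b' : T -> 'I_p -> R,
    (\forall t \near U, nonneg_on (S :\ j0) (b' t)) /\
    forall i, blk i = nu -> (fun t => hcomb (b' t) (y t) i) @ U --> d i.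
Proof.
move=> hS b_nonneg bd s_oo.
have [a [[a_ge0 aS] a_dep]] := dependence_of_unbounded b_nonneg bd s_oo.
apply: cone_limit_shrink b_nonneg _ bd.
exact: y_cvg (cpld hS (ex_intro _ a (conj aS (conj a_ge0 a_dep)))).
Qed.

Lemma cone_limit k (S : {set 'I_p}) (b : T -> 'I_p -> R) (d : 'I_n -> R) :
  (#|S| <= k)%N -> (forall j, j \in S -> h j xbar = 0) ->
  (\forall t \near U, nonneg_on S (b t)) ->
  (forall i, blk i = nu -> (fun t => hcomb (b t) (y t) i) @ U --> d i) ->
  in_cone S d.
Proof.
elim: k S b => [|k IH] S b S_k hS b_nonneg bd.
  move: S_k; rewrite leqn0 => /eqP/cards0_eq S0.
  have s0 : \forall t \near U, \sum_(j < p) b t j <= 0.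
    by apply: filterS b_nonneg => t [_ bS]; rewrite big1 // => j _; rewrite bS // S0 inE.
  exact: cone_limit_bounded s0 b_nonneg bd.
have [[M sM]|s_oo] := ultra_bounded_or_cvgy U_ultra (fun t => \sum_(j < p) b t j).
  exact: cone_limit_bounded sM b_nonneg bd.
have [j0 [j0S [b' [b'_nonneg b'd]]]] := cone_limit_unbounded hS b_nonneg bd s_oo.
have S'_k : (#|S :\ j0| <= k)%N by move: S_k; rewrite (cardsD1 j0 S) j0S.
have hS' j : j \in S :\ j0 -> h j xbar = 0 by move=> /setD1P[_]; exact: hS.
have [w [[w_ge0 wS] wd]] := IH _ _ S'_k hS' b'_nonneg b'd.
exists w; split => //; split => // j jS; apply: wS.
by rewrite in_setD1 (negbTE jS) andbF.
Qed.

End cpld_cone.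

Definition feasibility_kkt (R : realType) (n N : nat) (blk : 'I_n -> 'I_N) (nu : 'I_N)
    (m p : nat) (g : 'I_m -> 'rV[R]_n -> R) (h : 'I_p -> 'rV[R]_n -> R) (xbar : 'rV[R]_n) :=
  exists w : 'I_p -> R,
    (forall i, blk i = nu ->
       pd (sqplus g) xbar i + \sum_(j < p) w j * pd (h j) xbar i = 0)
    /\ (forall j, Num.min (- h j xbar) (w j) = 0).

Lemma C1_continuous (R : realType) n (f : 'rV[R]_n -> R) : C1 f -> continuous f.
Proof. by move=> [df _] z; exact: differentiable_continuous. Qed.

Section alm_player.
Context {R : realType} {n N : nat} {blk : 'I_n -> 'I_N} {nu : 'I_N} {m p : nat}.
Context {theta : 'rV[R]_n -> R} {g : 'I_m -> 'rV[R]_n -> R} {h : 'I_p -> 'rV[R]_n -> R}.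
Hypotheses (theta_C1 : C1 theta) (g_C1 : forall j, C1 (g j)) (h_C1 : forall j, C1 (h j)).
Context {tau gamma : R} {umax : 'I_m -> R}.
Hypotheses (tau_bnd : 0 < tau < 1) (gamma_gt1 : 1 < gamma) (umax_ge0 : forall j, 0 <= umax j).
Context {x : nat -> 'rV[R]_n} {lam u : nat -> 'I_m -> R} {mu : nat -> 'I_p -> R}.
Context {rho eps eps' : nat -> R} {B : R}.
Hypotheses (rho0_gt0 : 0 < rho 0%N) (eps_le : forall k, eps k <= B).
Hypothesis eps'_cvg0 : eps' @ \oo --> (0 : R).

Local Notation hcomb b z i := (\sum_(j < p) b j * pd (h j) z i).
Local Notation residual k :=
  (enorm (fun j : 'I_m => Num.min (- g j (x k)) (lam k j))).

Hypothesis grad_le : forall k i, blk i = nu ->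
  `|pd (La theta g (u k) (rho k)) (x k.+1) i + hcomb (mu k.+1) (x k.+1) i| <= eps k.
Hypothesis compl_le : forall k,
  enorm (fun j : 'I_p => Num.min (- h j (x k.+1)) (mu k.+1 j)) <= eps' k.
Hypothesis lam_def : forall k j, lam k.+1 j = Num.max 0 (u k j + rho k * g j (x k.+1)).
Hypothesis rho_def : forall k,
  rho k.+1 = if residual k.+1 <= tau * residual k then rho k else gamma * rho k.
Hypothesis u_def : forall k j, u k.+1 j = Num.min (lam k.+1 j) (umax j).

Local Notation residual_contracts :=
  (exists K, forall k, (K <= k)%N -> residual k.+1 <= tau * residual k).

Context {xbar : 'rV[R]_n} {U : set_system nat}.
Hypotheses (U_ultra : UltraFilter U) (U_oo : (\oo : set_system nat) `<=` U).
Hypothesis x_cvg : (fun k => x k.+1) @ U --> xbar.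
Hypothesis cpld : CPLD blk nu h xbar.

Lemma rho_gt0 k : 0 < rho k.
Proof.
elim: k => // k IH; rewrite rho_def; case: ifP => // _.
by rewrite mulr_gt0 // (lt_trans _ gamma_gt1).
Qed.

Lemma rho_nondecreasing : {homo rho : k l / (k <= l)%N >-> k <= l}.
Proof.
apply: (homo_leq le_refl le_trans) => k; rewrite rho_def; case: ifP => // _.
by rewrite ler_pMl ?rho_gt0 // ltW.
Qed.

Lemma U_cvg (f : nat -> R) (F : set_system R) : f @ \oo --> F -> f @ U --> F.
Proof. by move=> fF A /fF; exact: U_oo. Qed.

Lemma cvg_along_x (f : 'rV[R]_n -> R) : continuous f ->
  (fun k => f (x k.+1)) @ U --> f xbar.
Proof. by move=> f_cont; apply: cvg_comp x_cvg (f_cont xbar). Qed.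

Lemma pd_cvg_along_x (f : 'rV[R]_n -> R) i : C1 f ->
  (fun k => pd f (x k.+1) i) @ U --> pd f xbar i.
Proof. by move=> [_ pd_cont]; exact: cvg_along_x (pd_cont i). Qed.

Lemma h_le0 j : h j xbar <= 0.
Proof.
rewrite -oppr_ge0; apply: (@ge0_cvg_of_min_cvg0 _ _ U _ _ (fun k => mu k.+1 j)).
  exact: cvgN (cvg_along_x (C1_continuous (h_C1 j))).
apply: norm_le_cvg0 (U_cvg eps'_cvg0); apply: nearW => k.
exact: le_trans (ler_norm_enorm _ j) (compl_le k).
Qed.

Lemma kkt_of_g_le0 : (forall j, g j xbar <= 0) ->
  feasibility_kkt blk nu g h xbar.
Proof.
move=> g_le0; exists (fun=> 0); split=> [i _|j]; last first.
  by rewrite min_r // oppr_ge0 h_le0.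
rewrite pd_sqplus => [|j]; last by case: (g_C1 j).
rewrite !big1 ?addr0 // => j _; first by rewrite mul0r.
by rewrite max_l ?g_le0 // mulr0 mul0r.
Qed.

Lemma residual_cvg0 : residual_contracts -> (fun k => residual k.+1) @ U --> 0.
Proof.
move=> [K decr].
have tau_ge0 : 0 <= tau by case/andP: tau_bnd => /ltW.
have geom l : residual (l + K)%N <= tau ^+ l * residual K.
  elim: l => [|l IH]; first by rewrite add0n expr0 mul1r.
  rewrite addSn exprS -mulrA; apply: le_trans (decr _ (leq_addl _ _)) _.
  exact: ler_wpM2l.
have geom_cvg0 : (fun l => tau ^+ l * residual K) @ \oo --> 0.
  rewrite -(mul0r (residual K)); apply: cvgM; last exact: cvg_cst.
  by apply: cvg_expr; rewrite ger0_norm //; case/andP: tau_bnd.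
apply: U_cvg; have : (fun k => residual k) @ \oo --> 0.
  rewrite -(cvg_shiftn K); apply: norm_le_cvg0 geom_cvg0; apply: nearW => l /=.
  by rewrite ger0_norm ?sqrtr_ge0.
by rewrite -cvg_shiftS.
Qed.

Lemma g_le0_of_residual_contracts : residual_contracts -> forall j, g j xbar <= 0.
Proof.
move=> /residual_cvg0 res0 j; rewrite -oppr_ge0.
apply: (@ge0_cvg_of_min_cvg0 _ _ U _ _ (fun k => lam k.+1 j)).
  exact: cvgN (cvg_along_x (C1_continuous (g_C1 j))).
by apply: norm_le_cvg0 res0; apply: nearW => k; exact: ler_norm_enorm.
Qed.

Lemma rho_cvgy : ~ residual_contracts -> rho @ \oo --> +oo%R.
Proof.
move=> not_contracts.
have often_incr K : exists2 k, (K <= k)%N & ~ residual k.+1 <= tau * residual k.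
  apply: contrapT => no_incr; apply: not_contracts; exists K => k Kk.
  by apply: contrapT => not_decr; apply: no_incr; exists k.
apply/cvgryPgt => M.
have incr l : exists K, forall k, (K <= k)%N -> gamma ^+ l * rho 0%N <= rho k.
  elim: l => [|l [K IH]].
    by exists 0%N => k _; rewrite expr0 mul1r rho_nondecreasing.
  have [k Kk no_decr] := often_incr K.
  exists k.+1 => k' kk'; apply: le_trans (rho_nondecreasing kk').
  rewrite rho_def ifN; last exact/negP.
  by rewrite exprS -mulrA ler_wpM2l ?IH // ltW // (lt_trans _ gamma_gt1).
have [l Ml] := exprn_unbounded M gamma_gt1 rho0_gt0.
have [K rhoK] := incr l; exists K => // k /= Kk; exact: lt_le_trans Ml (rhoK k Kk).
Qed.

Lemma u_bnd k j : `|u k.+1 j| <= umax j.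
Proof.
have lam_ge0 : 0 <= lam k.+1 j by rewrite lam_def le_max lexx.
by rewrite u_def ger0_norm ?le_min ?lam_ge0 ?umax_ge0 // ge_min lexx orbT.
Qed.

Lemma eps'_ge0 k : 0 <= eps' k.
Proof. exact: le_trans (sqrtr_ge0 _) (compl_le k). Qed.

Lemma mu_ge k j : - eps' k <= mu k.+1 j.
Proof.
have := le_trans (ler_norm_enorm _ j) (compl_le k); rewrite ler_norml => /andP[+ _].
by move/le_trans; apply; rewrite ge_min lexx orbT.
Qed.

Lemma inactive_mu_le j : h j xbar < 0 -> \forall k \near U, `|mu k.+1 j| <= eps' k.
Proof.
move=> h_lt0; have hh_lt : h j xbar < h j xbar / 2 by lra.
have eps_lt : 0 < - h j xbar / 2 by lra.
have near_h := cvgr_lt _ (cvg_along_x (C1_continuous (h_C1 j))) _ hh_lt.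
have near_eps := cvgr_lt _ (U_cvg eps'_cvg0) _ eps_lt.
near=> k; have hk : h j (x k.+1) < h j xbar / 2 by near: k; exact: near_h.
have epsk : eps' k < - h j xbar / 2 by near: k; exact: near_eps.
have compl := le_trans (ler_norm_enorm _ j) (compl_le k).
have [hm|mh] := leP (- h j (x k.+1)) (mu k.+1 j).
  by move: compl; rewrite min_l // ger0_norm => *; lra.
by move: compl; rewrite min_r // ltW.
Unshelve. all: by end_near. Qed.

Section penalty_unbounded.
Hypothesis rho_oo : rho @ \oo --> +oo%R.

Lemma rho_inv_cvg0 : (fun k => (rho k)^-1) @ U --> 0.
Proof. by apply/gtr0_cvgV0; [exact: nearW rho_gt0|exact: U_cvg]. Qed.

Lemma rho_ge1 : \forall k \near U, 1 <= rho k.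
Proof. by apply: U_oo; move/cvgryPge: rho_oo; apply. Qed.

Lemma bounded_div_rho_cvg0 (f : nat -> R) (C : R) :
  (\forall k \near U, `|f k| <= C) -> (fun k => f k / rho k) @ U --> 0.
Proof.
move=> fC; apply: (norm_le_cvg0 (e := fun k => C * (rho k)^-1)).
  apply: filterS fC => k fk; rewrite normrM normfV (gtr0_norm (rho_gt0 k)).
  by apply: ler_wpM2r => //; rewrite invr_ge0 ltW // rho_gt0.
by rewrite -(mulr0 C); apply: cvgM rho_inv_cvg0; exact: cvg_cst.
Qed.

Lemma shifted_constraint_cvg j :
  (fun k => Num.max 0 (g j (x k.+1) + u k j / rho k)) @ U --> Num.max 0 (g j xbar).
Proof.
apply: cvg_max0; rewrite -[X in _ --> X]addr0; apply: cvgD.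
  exact: cvg_along_x (C1_continuous (g_C1 j)).
apply: (@bounded_div_rho_cvg0 _ (umax j)); apply: filterS (U_oo (nbhs_infty_ge 1)).
by case=> // k _; exact: u_bnd.
Qed.

Local Notation half_pd_sqplus i :=
  (\sum_(j < m) Num.max 0 (g j xbar) * pd (g j) xbar i).

Lemma scaled_multipliers_cvg i : blk i = nu ->
  (fun k => hcomb (fun j => mu k.+1 j / rho k) (x k.+1) i) @ U --> - half_pd_sqplus i.
Proof.
move=> blk_i.
pose G k := pd (La theta g (u k) (rho k)) (x k.+1) i + hcomb (mu k.+1) (x k.+1) i.
pose P k := \sum_(j < m) Num.max 0 (g j (x k.+1) + u k j / rho k) * pd (g j) (x k.+1) i.
have G_cvg0 : (fun k => G k / rho k) @ U --> 0.
  apply: (@bounded_div_rho_cvg0 _ B); apply: nearW => k.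
  exact: le_trans (grad_le k blk_i) (eps_le k).
have theta_cvg0 : (fun k => pd theta (x k.+1) i / rho k) @ U --> 0.
  rewrite -(mulr0 (pd theta xbar i)); apply: cvgM rho_inv_cvg0.
  exact: pd_cvg_along_x theta_C1.
have P_cvg : P @ U --> half_pd_sqplus i.
  apply: cvg_sum => j; apply: cvgM; first exact: shifted_constraint_cvg.
  exact: pd_cvg_along_x (g_C1 j).
have lim : (fun k => G k / rho k - pd theta (x k.+1) i / rho k - P k) @ U
    --> - half_pd_sqplus i.
  rewrite -[X in _ --> X]sub0r -[X in _ --> X - _](subrr 0).
  by apply: cvgB => //; apply: cvgB.
apply: cvg_trans lim; apply: near_eq_cvg; apply: nearW => k.
have rho_neq0 : rho k != 0 by rewrite gt_eqF // rho_gt0.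
rewrite /G pd_La; [|by case: theta_C1|by move=> j; case: (g_C1 j)].
rewrite [RHS](eq_bigr (fun j => mu k.+1 j * pd (h j) (x k.+1) i / rho k)); last first.
  by move=> j _; rewrite mulrAC.
by rewrite -mulr_suml /P; field.
Qed.

Let active : {set 'I_p} := [set j | h j xbar == 0]%SET.
Let active_part k j := if j \in active then Num.max 0 (mu k.+1 j / rho k) else 0.

Lemma scaled_minus_active_cvg0 j : (fun k => mu k.+1 j / rho k - active_part k j) @ U --> 0.
Proof.
apply: norm_le_cvg0 _ (U_cvg eps'_cvg0); rewrite /active_part /active inE.
have [h0|h_neq0] := eqVneq (h j xbar) 0; last first.
  have h_lt0 : h j xbar < 0 by rewrite lt_neqAle h_neq0 h_le0.
  apply: filterS (filterI (inactive_mu_le h_lt0) rho_ge1) => k [mu_le rho1].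
  rewrite subr0 normrM normfV (gtr0_norm (rho_gt0 k)) ler_pdivrMr ?rho_gt0 //.
  by rewrite (le_trans mu_le) // ler_peMr // eps'_ge0.
apply: filterS rho_ge1 => k rho1 /=; have [mu_ge0|mu_lt0] := leP 0 (mu k.+1 j / rho k).
  by rewrite subrr normr0 eps'_ge0.
rewrite subr0 ltr0_norm // -mulNr ler_pdivrMr ?rho_gt0 //.
have := mu_ge k j; have := eps'_ge0 k; nra.
Qed.

Lemma active_part_cvg i : blk i = nu ->
  (fun k => hcomb (active_part k) (x k.+1) i) @ U --> - half_pd_sqplus i.
Proof.
move=> blk_i.
have rest_cvg0 : (fun k => hcomb (fun j => mu k.+1 j / rho k - active_part k j) (x k.+1) i)
    @ U --> 0.
  apply: cvg_trans (_ : _ --> hcomb (fun=> 0) xbar i) _.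
    apply: cvg_sum => j; apply: cvgM; first exact: scaled_minus_active_cvg0.
    exact: pd_cvg_along_x (h_C1 j).
  by rewrite big1 // => j _; rewrite mul0r.
have lim : (fun k => hcomb (fun j => mu k.+1 j / rho k) (x k.+1) i
    - hcomb (fun j => mu k.+1 j / rho k - active_part k j) (x k.+1) i)
    @ U --> - half_pd_sqplus i - 0.
  by apply: cvgB => //; exact: scaled_multipliers_cvg.
rewrite -[X in _ --> X](subr0 (- half_pd_sqplus i)).
apply: cvg_trans lim; apply: near_eq_cvg; apply: nearW => k.
by rewrite -sumrB; apply: eq_bigr => j _; rewrite -mulrBl opprB addrC subrK.
Qed.

Lemma kkt_of_rho_cvgy : feasibility_kkt blk nu g h xbar.
Proof.
have active_h0 j : j \in active -> h j xbar = 0 by rewrite inE => /eqP.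
have active_nonneg : \forall k \near U, nonneg_on active (active_part k).
  apply: nearW => k; split=> j; rewrite /active_part; last by move/negbTE ->.
  by case: ifP => _; rewrite ?le_max lexx.
have pd_h_cont j i : continuous (fun z => pd (h j) z i) by case: (h_C1 j).
have [w [[w_ge0 w_inactive] w_comb]] := cone_limit cpld pd_h_cont U_ultra x_cvg
  (leqnn _) active_h0 active_nonneg active_part_cvg.
exists (fun j => 2 * w j); split=> [i blk_i|j].
  rewrite pd_sqplus => [|j]; last by case: (g_C1 j).
  under eq_bigr do rewrite -mulrA.
  under [X in _ + X]eq_bigr do rewrite -mulrA.
  by rewrite -!mulr_sumr w_comb // mulrN subrr.
have [j_act|j_inact] := boolP (j \in active).
  by rewrite active_h0 // oppr0 min_l // mulr_ge0.
by rewrite w_inactive // mulr0 min_r // oppr_ge0 h_le0.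
Qed.

End penalty_unbounded.

Lemma alm_player_kkt : feasibility_kkt blk nu g h xbar.
Proof.
have [contracts|not_contracts] := pselect residual_contracts.
  exact/kkt_of_g_le0/g_le0_of_residual_contracts.
exact/kkt_of_rho_cvgy/rho_cvgy.
Qed.

End alm_player.

Lemma ultra_subseq_cvg (T : topologicalType) (x : nat -> T) (xbar : T) (phi : nat -> nat) :
  (forall a b, (a < b)%N -> (phi a < phi b)%N) -> (fun k => x (phi k)) @ \oo --> xbar ->
  exists U : set_system nat, [/\ UltraFilter U, (\oo : set_system nat) `<=` U
    & (fun k => x k.+1) @ U --> xbar].
Proof.
move=> phi_incr x_phi.
have phi_ge k : (k <= phi k)%N.
  by elim: k => // k IH; exact: leq_ltn_trans IH (phi_incr _ _ (ltnSn k)).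
have phiS k : (phi k.+1).-1.+1 = phi k.+1 by rewrite (ltn_predK (phi_ge k.+1)).
(* U refines the image of \oo under k |-> phi (k + 1) - 1, so that x (k + 1) runs
   along the convergent subsequence. *)
pose F := (fun k => (phi k.+1).-1) @ (\oo : set_system nat).
have [U [U_ultra FU]] := @ultraFilterLemma _ F _.
exists U; split => // [A [N _ NA]|A /x_phi [N _ NA]]; apply: FU; exists N => // k Nk /=.
  by apply: NA; apply: (leq_trans Nk); rewrite -ltnS phiS.
by rewrite phiS; apply: NA; exact: leqW.
Qed.

Theorem corollary4p2
  (R : realType) (n N : nat) (blk : 'I_n -> 'I_N) (m p : 'I_N -> nat)
  (theta : 'I_N -> 'rV[R]_n -> R)
  (g : forall nu : 'I_N, 'I_(m nu) -> 'rV[R]_n -> R)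
  (h : forall nu : 'I_N, 'I_(p nu) -> 'rV[R]_n -> R)
  (Htheta : forall nu, C1 (theta nu))
  (Hg : forall nu j, C1 (g nu j))
  (Hh : forall nu j, C1 (h nu j))
  (tau gamma : 'I_N -> R) (umax : forall nu : 'I_N, 'I_(m nu) -> R)
  (Htau : forall nu, 0 < tau nu < 1)
  (Hgamma : forall nu, 1 < gamma nu)
  (Humax : forall nu j, 0 <= umax nu j)
  (x : nat -> 'rV[R]_n)
  (lam u : nat -> forall nu : 'I_N, 'I_(m nu) -> R)
  (mu : nat -> forall nu : 'I_N, 'I_(p nu) -> R)
  (rho : nat -> 'I_N -> R)
  (Hrho0 : forall nu, 0 < rho 0%N nu)
  (eps eps' : nat -> R)
  (Heps_nonneg : forall k, 0 <= eps k)
  (Heps_bnd : exists B : R, forall k, eps k <= B)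
  (Heps'_cvg : eps' @ \oo --> (0 : R))
  (* step (1): inexactness assumption *)
  (Hinex_grad : forall k nu,
     bnorm blk nu (fun i =>
        pd (La (theta nu) (g nu) (u k nu) (rho k nu)) (x k.+1) i
        + \sum_(j < p nu) mu k.+1 nu j * pd (h nu j) (x k.+1) i) <= eps k)
  (Hinex_compl : forall k nu,
     enorm (fun j : 'I_(p nu) => Num.min (- h nu j (x k.+1)) (mu k.+1 nu j))
       <= eps' k)
  (* step (2): multiplier update *)
  (Hlam : forall k nu j,
     lam k.+1 nu j = Num.max 0 (u k nu j + rho k nu * g nu j (x k.+1)))
  (* step (3): penalty update *)
  (Hrho : forall k nu,
     rho k.+1 nu =
       if enorm (fun j : 'I_(m nu) => Num.min (- g nu j (x k.+1)) (lam k.+1 nu j))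
            <= tau nu * enorm (fun j : 'I_(m nu) => Num.min (- g nu j (x k)) (lam k nu j))
       then rho k nu else gamma nu * rho k nu)
  (* step (4): safeguarded multiplier update *)
  (Hu : forall k nu j, u k.+1 nu j = Num.min (lam k.+1 nu j) (umax nu j))
  (xbar : 'rV[R]_n)
  (Hlimpt : exists phi : nat -> nat,
     (forall a b, (a < b)%N -> (phi a < phi b)%N) /\
     (fun k => x (phi k)) @ \oo --> xbar)
  (HCPLD : forall nu, CPLD blk nu (h nu) xbar) :
  forall nu : 'I_N, exists w : 'I_(p nu) -> R,
    (forall i, blk i = nu ->
       pd (sqplus (g nu)) xbar i + \sum_(j < p nu) w j * pd (h nu j) xbar i = 0)
    /\ (forall j, Num.min (- h nu j xbar) (w j) = 0).
Proof.
move=> nu; have [phi [phi_incr x_phi]] := Hlimpt.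
have [U [U_ultra U_oo x_cvg]] := ultra_subseq_cvg phi_incr x_phi.
have [B eps_le] := Heps_bnd.
have grad_le k i : blk i = nu ->
    `|pd (La (theta nu) (g nu) (u k nu) (rho k nu)) (x k.+1) i
      + \sum_(j < p nu) mu k.+1 nu j * pd (h nu j) (x k.+1) i| <= eps k.
  by move=> blk_i; exact: le_trans (ler_norm_bnorm _ blk_i) (Hinex_grad k nu).
exact: (alm_player_kkt (mu := fun k => mu k nu) (Htheta nu) (Hg nu) (Hh nu)
  (Htau nu) (Hgamma nu) (Humax nu) (Hrho0 nu) eps_le Heps'_cvg grad_le
  (fun k => Hinex_compl k nu) (fun k => Hlam k nu) (fun k => Hrho k nu)
  (fun k => Hu k nu) U_ultra U_oo x_cvg (HCPLD nu)).
Qed.
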